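(* Let $m=2$. For every polynomial $f\in\mathbb{C}[\mathbf{a},\mathbf{b}]$, we have $f+Rf\in\mathrm{LSym}[\kappa_1^{-1},\dots,\kappa_n^{-1}]$, where $Rf=f\circ R$.
   Context: Variables $a_1,\dots,a_n,b_1,\dots,b_n$ (subscripts mod $n$), where $a_i=x_1^i$, $b_i=x_2^i$. $\mathrm{LSym}$ is the $\mathbb{C}$-subalgebra of $\mathbb{C}[\mathbf{a},\mathbf{b}]$ generated by $a_i+b_{i-1}$ and $a_ib_i$ for $i\in[n]$. Let $\kappa_i=\sum_{k=0}^{n-1}b_ib_{i+1}\cdots b_{i+k-1}a_{i+k+1}\cdots a_{i+n-1}$. The geometric $R$-matrix is the rational map $R:a_i\mapsto b_i\kappa_{i+1}/\kappa_i$, $b_i\mapsto a_i\kappa_i/\kappa_{i+1}$. *)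

From HB Require Import structures.
From mathcomp Require Import all_boot all_algebra.
From mathcomp Require Import Rstruct complex.
From mathcomp Require Import mpoly.
From mathcomp Require Import fraction.

Set Implicit Arguments.
Unset Strict Implicit.
Unset Printing Implicit Defensive.

Import GRing.Theory.
Local Open Scope ring_scope.

Definition CC : numClosedFieldType := complex Rdefinitions.R.

(* C[a_1..a_n, b_1..b_n]: 2n variables; variable (lshift n j) is a_j,
   variable (rshift n j) is b_j, for j : 'I_n (subscripts taken mod n). *)
Definition Pol (n : nat) := {mpoly CC[n + n]}.

Definition Frac (n : nat) := {fraction Pol n}.

Definition toF (n : nat) (p : Pol n) : Frac n := FracField.tofrac p.

Definition va (n : nat) (i : nat) : Pol n :=
  if (insub (i %% n)%N : option 'I_n) is Some j then 'X_(lshift n j) else 0.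
Definition vb (n : nat) (i : nat) : Pol n :=
  if (insub (i %% n)%N : option 'I_n) is Some j then 'X_(rshift n j) else 0.

Definition kappa (n : nat) (i : nat) : Pol n :=
  \sum_(k < n) ((\prod_(0 <= t < k) vb n (i + t)%N) *
                (\prod_(k.+1 <= t < n) va n (i + t)%N)).

(* Images of the variables under the geometric R-matrix:
   a_i |-> b_i kappa_{i+1} / kappa_i,  b_i |-> a_i kappa_i / kappa_{i+1}. *)
Definition Rvar (n : nat) (v : 'I_(n + n)) : Frac n :=
  match split v with
  | inl j => toF (vb n j) * toF (kappa n j.+1) / toF (kappa n j)
  | inr j => toF (va n j) * toF (kappa n j) / toF (kappa n j.+1)
  end.

Definition Rmat (n : nat) (f : Pol n) : Frac n :=
  mmap (fun c : CC => toF (c%:MP)) (@Rvar n) f.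

(* Generators of LSym[kappa_1^{-1}, ..., kappa_n^{-1}] as a C-algebra:
   a_i + b_{i-1}, a_i b_i, kappa_i^{-1} for i in [n]. *)
Definition lsym_gen (n : nat) (v : 'I_(n + n + n)) : Frac n :=
  match split v with
  | inl w => match split w with
             | inl i => toF (va n i + vb n (i + n).-1%N)
             | inr i => toF (va n i * vb n i)
             end
  | inr i => (toF (kappa n i))^-1
  end.

Definition in_LSym_loc (n : nat) (x : Frac n) : Prop :=
  exists P : {mpoly CC[n + n + n]},
    x = mmap (fun c : CC => toF (c%:MP)) (@lsym_gen n) P.

(* Put th = a_1 ... a_n and th' = b_1 ... b_n.  Cyclic expansion of kappa gives
   a_j kappa_j = th + g_j and b_j kappa_{j+1} = th' + g_j with g_j in LSym, so
   every variable x can be written x = l + l' th with R x = l + l' th', for some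
   l, l' in LSym[kappa^-1].  As th + th' and th th' lie in LSym (th and th' are
   the roots of a quadratic over it), such conjugate pairs are closed under
   sums and products, hence every f has this form, and
   f + R f = 2 l + l' (th + th') lies in LSym[kappa^-1]. *)

From HB Require Import structures.
From mathcomp Require Import all_boot all_algebra.
From mathcomp Require Import Rstruct complex.
From mathcomp Require Import mpoly.
From mathcomp Require Import fraction.
From mathcomp Require Import ring.
Import GRing.Theory.
Local Open Scope ring_scope.

Set Implicit Arguments.
Unset Strict Implicit.

Section Chain.
Variables (S : comNzRingType) (a b : nat -> S).

Definition seg_prod (s : nat -> S) i m := \prod_(0 <= t < m) s (i + t)%N.

Definition kchain i m := \sum_(k < m)
  ((\prod_(0 <= t < k) b (i + t)%N) * (\prod_(k.+1 <= t < m) a (i + t)%N)).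

Lemma seg_prodS s i m : seg_prod s i m.+1 = seg_prod s i m * s (i + m)%N.
Proof. by rewrite /seg_prod big_nat_recr. Qed.

Lemma seg_prodSl s i m : seg_prod s i m.+1 = s i * seg_prod s i.+1 m.
Proof.
rewrite /seg_prod big_nat_recl // addn0; congr (_ * _).
by apply: eq_bigr => t _; rewrite addnS addSn.
Qed.

Lemma kchain0 i : kchain i 0 = 0.
Proof. by rewrite /kchain big_ord0. Qed.

Lemma kchainS i m : kchain i m.+1 = kchain i m * a (i + m)%N + seg_prod b i m.
Proof.
rewrite /kchain big_ord_recr /= [X in _ + _ * X]big_geq // mulr1 mulr_suml.
by congr (_ + _); apply: eq_bigr => k _; rewrite big_nat_recr //= mulrA.
Qed.

Lemma kchain1 i : kchain i 1 = 1.
Proof. by rewrite kchainS kchain0 mul0r add0r /seg_prod big_geq. Qed.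

Lemma kchainSl i m : kchain i m.+1 = seg_prod a i.+1 m + b i * kchain i.+1 m.
Proof.
elim: m => [|m IH]; first by rewrite kchain1 kchain0 /seg_prod big_geq // mulr0 addr0.
by rewrite kchainS IH kchainS (seg_prodS a) (seg_prodSl b) addSnnS; ring.
Qed.

Lemma kchain_rec i m : kchain i m.+2 =
  (a (i + m).+1 + b (i + m)) * kchain i m.+1 - a (i + m) * b (i + m) * kchain i m.
Proof. by rewrite kchainS (kchainS i m) seg_prodS -addnS; ring. Qed.

Lemma kchain_const i m : (forall t, a t = 1) -> (forall t, b t = 0) ->
  (0 < m)%N -> kchain i m = 1.
Proof.
move=> a1 b0; case: m => // m _; elim: m => [|m IH]; first exact: kchain1.
by rewrite kchainS IH a1 mul1r seg_prodS b0 mulr0 addr0.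
Qed.

Section Periodic.
Variables (n : nat) (n_gt0 : (0 < n)%N).
Hypotheses (a_per : forall j, a (j + n)%N = a j) (b_per : forall j, b (j + n)%N = b j).

Lemma seg_prod_per {s : nat -> S} : (forall j, s (j + n)%N = s j) ->
  forall j, seg_prod s j n = seg_prod s 0 n.
Proof.
move=> s_per; elim=> // j <-; case: n n_gt0 s_per => // k _ s_per.
by rewrite seg_prodS seg_prodSl addSnnS s_per mulrC.
Qed.

Lemma mul_kchain_a j :
  a j * kchain j n = seg_prod a 0 n + a j * b j * kchain j.+1 n.-1.
Proof.
rewrite -(seg_prod_per a_per j); case: n n_gt0 => // k _ /=.
by rewrite kchainSl seg_prodSl; ring.
Qed.

Lemma mul_kchain_b j :
  b j * kchain j.+1 n = seg_prod b 0 n + a j * b j * kchain j.+1 n.-1.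
Proof.
rewrite -(seg_prod_per b_per j); case: n n_gt0 a_per => // k _ a_per' /=.
by rewrite kchainS seg_prodSl addSnnS a_per'; ring.
Qed.

Lemma seg_prod_addE :
  seg_prod a 0 n + seg_prod b 0 n = kchain 0 n.+1 - a 0 * b 0 * kchain 1 n.-1.
Proof.
rewrite kchainSl (seg_prod_per a_per 1); case: n n_gt0 a_per => // k _ a_per' /=.
by rewrite kchainS (seg_prodSl b) addSnnS a_per'; ring.
Qed.

End Periodic.
End Chain.

Lemma rmorph_kchain (S T : comNzRingType) (f : {rmorphism S -> T}) a b i m :
  f (kchain a b i m) = kchain (f \o a) (f \o b) i m.
Proof.
rewrite rmorph_sum; apply: eq_bigr => k _.
by rewrite rmorphM !rmorph_prod.
Qed.

Lemma mpoly_ring_ind (R : comNzRingType) k (P : {mpoly R[k]} -> Prop) :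
  (forall c, P c%:MP) -> (forall i, P 'X_i) ->
  (forall p q, P p -> P q -> P (p + q)) -> (forall p q, P p -> P q -> P (p * q)) ->
  forall p, P p.
Proof.
move=> PC PX PD PM; elim/mpolyind => [|c m p _ _ Pp]; first by rewrite -mpolyC0.
apply: (PD) Pp; rewrite -mul_mpolyC mpolyXE_id; apply: (PM) => //.
apply: (big_ind P); [by rewrite -mpolyC1 | exact: PM | move=> i _].
by elim: (m i) => [|e IH]; rewrite ?expr0 -?mpolyC1 // exprS; apply: PM.
Qed.

Section ConjugatePairs.
Variables (F : comNzRingType) (L : F -> Prop).
Hypotheses (L_D : forall x y, L x -> L y -> L (x + y))
           (L_N : forall x, L x -> L (- x))
           (L_M : forall x y, L x -> L y -> L (x * y)).
Variables th th' : F.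
Hypotheses (L_thD : L (th + th')) (L_thM : L (th * th')).

Definition conj_pair x y :=
  exists l l', [/\ L l, L l', x = l + l' * th & y = l + l' * th'].

Lemma conj_pair_diag c : L c -> conj_pair c c.
Proof.
move=> Lc; have L0 : L 0 by rewrite -(subrr c); apply: L_D (L_N _).
by exists c, 0; rewrite !mul0r addr0.
Qed.

Lemma conj_pairD x y x' y' :
  conj_pair x y -> conj_pair x' y' -> conj_pair (x + x') (y + y').
Proof.
move=> [l [m [Ll Lm -> ->]]] [l' [m' [Ll' Lm' -> ->]]].
by exists (l + l'), (m + m'); split; [exact: L_D | exact: L_D | ring | ring].
Qed.

Lemma conj_pairM x y x' y' :
  conj_pair x y -> conj_pair x' y' -> conj_pair (x * x') (y * y').
Proof.
move=> [l [m [Ll Lm -> ->]]] [l' [m' [Ll' Lm' -> ->]]].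
exists (l * l' - m * m' * (th * th')), (l * m' + m * l' + m * m' * (th + th')).
split; [| | ring | ring].
- by apply: L_D; [apply: L_M | apply/L_N/L_M => //; apply: L_M].
- by apply: L_D; [apply: L_D; apply: L_M | apply: L_M => //; apply: L_M].
Qed.

Lemma conj_pair_swap x y : conj_pair x y -> conj_pair y x.
Proof.
move=> [l [m [Ll Lm -> ->]]].
exists (l + m * (th + th')), (- m).
by split; [apply: L_D (L_M _ _) | exact: L_N | ring | ring].
Qed.

Lemma conj_pair_div K k g x y : L k -> L g -> k * K = 1 ->
  x * K = th + g -> y * K = th' + g -> conj_pair x y.
Proof.
move=> Lk Lg kK xK yK; exists (g * k), k; split; [exact: L_M | by [] | |].
- by rewrite -[x]mulr1 -kK mulrCA xK; ring.
- by rewrite -[y]mulr1 -kK mulrCA yK; ring.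
Qed.

Lemma conj_pair_add x y : conj_pair x y -> L (x + y).
Proof.
move=> [l [m [Ll Lm -> ->]]].
have -> : l + m * th + (l + m * th') = l + l + m * (th + th') by ring.
by apply: L_D; [apply: L_D | apply: L_M].
Qed.

End ConjugatePairs.

Lemma split_lshift m k (x : 'I_m) : split (lshift k x) = inl x.
Proof. exact: (unsplitK (inl x)). Qed.

Lemma split_rshift m k (x : 'I_k) : split (rshift m x) = inr x.
Proof. exact: (unsplitK (inr x)). Qed.

Section LSym.
Variables (n : nat) (n_gt0 : (0 < n)%N).

Local Notation a := (va n).
Local Notation b := (vb n).
Local Notation L := (@in_LSym_loc n).

Definition constF : {rmorphism CC -> Frac n} :=
  (@FracField.tofrac (Pol n)) \o (@mpolyC (n + n) CC).

Local Notation lsym_eval := (mmap constF (@lsym_gen n)).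

Lemma LSymD x y : L x -> L y -> L (x + y).
Proof. by move=> [P ->] [Q ->]; exists (P + Q); rewrite (rmorphD lsym_eval). Qed.

Lemma LSymN x : L x -> L (- x).
Proof. by move=> [P ->]; exists (- P); rewrite (rmorphN lsym_eval). Qed.

Lemma LSymM x y : L x -> L y -> L (x * y).
Proof. by move=> [P ->] [Q ->]; exists (P * Q); rewrite (rmorphM lsym_eval). Qed.

Lemma LSym0 : L 0.
Proof. by exists 0; rewrite (rmorph0 lsym_eval). Qed.

Lemma LSym1 : L 1.
Proof. by exists 1; rewrite (rmorph1 lsym_eval). Qed.

Lemma LSymC c : L (toF c%:MP).
Proof. by exists c%:MP; rewrite (mmapC _ constF). Qed.

Lemma LSym_gen v : L (lsym_gen v).
Proof. by exists 'X_v; rewrite (mmapX _ constF) mmap1U. Qed.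

Lemma va_mod i j : i = j %[mod n] -> a i = a j.
Proof. by rewrite /va => ->. Qed.

Lemma vb_mod i j : i = j %[mod n] -> b i = b j.
Proof. by rewrite /vb => ->. Qed.

Lemma va_per j : a (j + n)%N = a j.
Proof. by apply: va_mod; rewrite modnDr. Qed.

Lemma vb_per j : b (j + n)%N = b j.
Proof. by apply: vb_mod; rewrite modnDr. Qed.

Lemma va_ord (j : 'I_n) : a j = 'X_(lshift n j).
Proof. by rewrite /va modn_small // valK. Qed.

Lemma vb_ord (j : 'I_n) : b j = 'X_(rshift n j).
Proof. by rewrite /vb modn_small // valK. Qed.

Definition ord_mod (j : nat) : 'I_n := Ordinal (ltn_pmod j n_gt0).

Lemma LSym_ab j : L (toF (a j * b j)).
Proof.
have := LSym_gen (lshift n (rshift n (ord_mod j))).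
rewrite /lsym_gen split_lshift split_rshift /=.
by rewrite (va_mod (j := j)) ?modn_mod // (vb_mod (j := j)) ?modn_mod.
Qed.

Lemma LSym_aSb j : L (toF (a j.+1 + b j)).
Proof.
have := LSym_gen (lshift n (lshift n (ord_mod j.+1))).
rewrite /lsym_gen !split_lshift /= (va_mod (j := j.+1)) ?modn_mod //.
rewrite (vb_mod (j := j)) // -subn1 -addnBA // modnDml addSn subn1.
by rewrite -addnS prednK // modnDr.
Qed.

Lemma LSym_kappaV j : L (toF (kappa n j))^-1.
Proof.
have := LSym_gen (rshift (n + n) (ord_mod j)); rewrite /lsym_gen split_rshift /=.
suff -> : kappa n (j %% n) = kappa n j by [].
rewrite /kappa; apply: eq_bigr => k _; congr (_ * _); apply: eq_bigr => t _.
  by apply: vb_mod; rewrite modnDml.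
by apply: va_mod; rewrite modnDml.
Qed.

Lemma kappaE j : kappa n j = kchain a b j n.
Proof. by []. Qed.

Lemma LSym_kchain i m : L (toF (kchain a b i m)).
Proof.
suff /(_ m)[] : forall k, L (toF (kchain a b i k)) /\ L (toF (kchain a b i k.+1)) by [].
elim=> [|k [Lk LkS]].
  by rewrite kchain0 kchain1 /toF rmorph0 rmorph1; split; [exact: LSym0 | exact: LSym1].
split=> //; rewrite kchain_rec /toF rmorphB !(rmorphM _ _ (kchain _ _ _ _)).
by apply: LSymD (LSymN (LSymM (LSym_ab _) Lk)); apply: LSymM (LSym_aSb _) LkS.
Qed.

Definition ev_ab (w : 'I_(n + n)) : CC := if split w is inl _ then 1 else 0.

Lemma kappa_neq0 j : toF (kappa n j) != 0.
Proof.
rewrite /toF tofrac_eq0; apply/negP => /eqP /(congr1 (meval ev_ab)).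
rewrite meval0 kappaE rmorph_kchain kchain_const // => [/eqP|t|t] /=.
- by rewrite oner_eq0.
- by rewrite (va_mod (j := ord_mod t)) ?modn_mod // va_ord mevalXU /ev_ab split_lshift.
- by rewrite (vb_mod (j := ord_mod t)) ?modn_mod // vb_ord mevalXU /ev_ab split_rshift.
Qed.

Local Notation th := (toF (seg_prod a 0 n)).
Local Notation th' := (toF (seg_prod b 0 n)).

Lemma LSym_thD : L (th + th').
Proof.
rewrite /toF -rmorphD (seg_prod_addE _ n_gt0 va_per) rmorphB rmorphM.
exact: LSymD (LSym_kchain _ _) (LSymN (LSymM (LSym_ab 0) (LSym_kchain _ _))).
Qed.

Lemma LSym_thM : L (th * th').
Proof.
rewrite /toF -rmorphM /seg_prod -big_split rmorph_prod /=.
by apply: (big_ind L) => [|x y|t _]; [exact: LSym1 | exact: LSymM | exact: LSym_ab].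
Qed.

Local Notation CP := (conj_pair L th th').

Lemma RmatD (f g : Pol n) : Rmat (f + g) = Rmat f + Rmat g.
Proof. exact: (rmorphD (mmap constF (@Rvar n))). Qed.

Lemma RmatM (f g : Pol n) : Rmat (f * g) = Rmat f * Rmat g.
Proof. exact: (rmorphM (mmap constF (@Rvar n))). Qed.

Lemma RmatC (c : CC) : Rmat (c%:MP : Pol n) = toF c%:MP.
Proof. exact: (mmapC _ constF). Qed.

Lemma RmatX (v : 'I_(n + n)) : Rmat ('X_v : Pol n) = Rvar v.
Proof. by rewrite /Rmat (mmapX _ constF) mmap1U. Qed.

Lemma conj_pair_kappa i j x y :
  x * toF (kappa n i) = th + toF (a j * b j * kchain a b j.+1 n.-1) ->
  y * toF (kappa n i) = th' + toF (a j * b j * kchain a b j.+1 n.-1) -> CP x y.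
Proof.
apply: (conj_pair_div LSymM (LSym_kappaV i) _ (mulVf (kappa_neq0 i))).
by rewrite /toF rmorphM; apply: LSymM (LSym_ab j) (LSym_kchain _ _).
Qed.

Lemma conj_pair_var (v : 'I_(n + n)) : CP (toF 'X_v) (Rmat ('X_v : Pol n)).
Proof.
pose g j := toF (a j * b j * kchain a b j.+1 n.-1).
have toF_a j : toF (a j) * toF (kappa n j) = th + g j.
  by rewrite /toF -rmorphM -rmorphD kappaE (mul_kchain_a _ n_gt0 va_per).
have toF_b j : toF (b j) * toF (kappa n j.+1) = th' + g j.
  by rewrite /toF -rmorphM -rmorphD kappaE (mul_kchain_b n_gt0 va_per vb_per).
rewrite RmatX /Rvar -(splitK v); case: (split v) => j /=.
  rewrite split_lshift -va_ord; apply: conj_pair_kappa (toF_a j) _.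
  by rewrite divfK ?kappa_neq0 // -mulrA toF_b.
rewrite split_rshift -vb_ord; apply: (conj_pair_swap LSymD LSymN LSymM LSym_thD).
apply: conj_pair_kappa _ (toF_b j).
by rewrite divfK ?kappa_neq0 // toF_a.
Qed.

Lemma conj_pair_toF_Rmat (f : Pol n) : CP (toF f) (Rmat f).
Proof.
elim/mpoly_ring_ind: f => [c|v|f g Pf Pg|f g Pf Pg].
- by rewrite RmatC; exact: (conj_pair_diag LSymD LSymN _ _ (LSymC c)).
- exact: conj_pair_var.
- by rewrite /toF rmorphD RmatD; exact: (conj_pairD LSymD Pf Pg).
- rewrite /toF rmorphM RmatM.
  exact: (conj_pairM LSymD LSymN LSymM LSym_thD LSym_thM Pf Pg).
Qed.

End LSym.

Theorem lemmaB3 (n : nat) (hn : (0 < n)%N) (f : Pol n) :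
  in_LSym_loc (toF f + Rmat f).
Proof.
exact: (conj_pair_add (@LSymD n) (@LSymM n) (LSym_thD hn) (conj_pair_toF_Rmat hn f)).
Qed.
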